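(* Let $(M,g,S)$ be as in the context and $u$ a tangent vector at a point of $M$. If $u$ is space-like (respectively isotropic, time-like) with respect to $\tilde g$, then $Su$, $S^2u$ and $S^3u$ are space-like (respectively isotropic, time-like).
   Context: $M$ is a 4-dimensional differentiable manifold with a positive definite metric $g$ and a tensor field $S$ of type $(1,1)$ whose components in some local coordinate system form the matrix with rows $(0,1,0,0)$, $(0,0,1,0)$, $(0,0,0,1)$, $(-1,0,0,0)$; hence $S^4=-\mathrm{id}$. It is assumed that $g(Su,Sv)=g(u,v)$ for all vector fields $u,v$. The associated metric is $\tilde g(u,v)=g(u,Sv)+g(Su,v)$. A vector $u$ is space-like if $\tilde g(u,u)>0$, time-like if $\tilde g(u,u)<0$, and isotropic if $u\neq 0$ and $\tilde g(u,u)=0$. *)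

From HB Require Import structures.
From mathcomp Require Import all_boot all_order all_algebra.
Set Implicit Arguments. Unset Strict Implicit. Unset Printing Implicit Defensive.
Import Order.TTheory GRing.Theory Num.Theory.
Local Open Scope ring_scope.

(* Pointwise setting: the tangent space at a point of M is identified, via the
   given local coordinates, with column vectors 'cV[R]_4. *)

(* The structure S: row i of its component matrix is
   (0,1,0,0), (0,0,1,0), (0,0,0,1), (-1,0,0,0); it acts on u by (S u)^i = S^i_j u^j. *)
Definition Smat {R : pzRingType} : 'M[R]_4 :=
  \matrix_(i < 4, j < 4)
    (if (i < 3)%N then ((j : nat) == i.+1)%:R else - ((j : nat) == 0%N)%:R).

Definition gform {R : pzRingType} (G : 'M[R]_4) (u v : 'cV[R]_4) : R :=
  (u^T *m G *m v) 0 0.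

Definition metric_symmetric {R : pzRingType} (G : 'M[R]_4) : Prop :=
  forall u v : 'cV[R]_4, gform G u v = gform G v u.

Definition metric_pos_def {R : numDomainType} (G : 'M[R]_4) : Prop :=
  forall u : 'cV[R]_4, u != 0 -> 0 < gform G u u.

Definition S_compatible {R : pzRingType} (G : 'M[R]_4) : Prop :=
  forall u v : 'cV[R]_4, gform G (Smat *m u) (Smat *m v) = gform G u v.

Definition gtilde {R : pzRingType} (G : 'M[R]_4) (u v : 'cV[R]_4) : R :=
  gform G u (Smat *m v) + gform G (Smat *m u) v.

Definition space_like {R : numDomainType} (G : 'M[R]_4) (u : 'cV[R]_4) : Prop :=
  0 < gtilde G u u.
Definition time_like {R : numDomainType} (G : 'M[R]_4) (u : 'cV[R]_4) : Prop :=
  gtilde G u u < 0.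
Definition isotropic {R : numDomainType} (G : 'M[R]_4) (u : 'cV[R]_4) : Prop :=
  u != 0 /\ gtilde G u u = 0.

From HB Require Import structures.
From mathcomp Require Import all_boot all_order all_algebra.
Import Order.TTheory GRing.Theory Num.Theory.
Set Implicit Arguments. Unset Strict Implicit.
Local Open Scope ring_scope.

(* Every power of S is an isometry of both g and g~, so the sign of g~(u,u) is
   unchanged; S^k u stays nonzero because g(S^k u, S^k u) = g(u, u) > 0. *)

Lemma Sexp_mulmxS (R : pzRingType) k (u : 'cV[R]_4) :
  (Smat ^+ k.+1) *m u = Smat *m ((Smat ^+ k) *m u).
Proof. by rewrite exprS -mulmxE mulmxA. Qed.

Section Isometries.

Variables (R : pzRingType) (G : 'M[R]_4).
Hypothesis GS : S_compatible G.

Lemma gform_Sexp k (u v : 'cV[R]_4) :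
  gform G ((Smat ^+ k) *m u) ((Smat ^+ k) *m v) = gform G u v.
Proof. by elim: k => [|k IHk]; rewrite ?expr0 ?mul1mx // !Sexp_mulmxS GS. Qed.

Lemma gtilde_S (u v : 'cV[R]_4) :
  gtilde G (Smat *m u) (Smat *m v) = gtilde G u v.
Proof. by rewrite /gtilde !GS. Qed.

Lemma gtilde_Sexp k (u v : 'cV[R]_4) :
  gtilde G ((Smat ^+ k) *m u) ((Smat ^+ k) *m v) = gtilde G u v.
Proof. by elim: k => [|k IHk]; rewrite ?expr0 ?mul1mx // !Sexp_mulmxS gtilde_S. Qed.

End Isometries.

Lemma gform0 (R : pzRingType) (G : 'M[R]_4) : gform G 0 0 = 0.
Proof. by rewrite /gform trmx0 !mul0mx mxE. Qed.

Section CausalCharacter.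

Variables (R : numDomainType) (G : 'M[R]_4).
Hypotheses (Gpos : metric_pos_def G) (GS : S_compatible G).

Lemma Sexp_mulmx_neq0 k (u : 'cV[R]_4) : u != 0 -> (Smat ^+ k) *m u != 0.
Proof.
move=> /Gpos gu_gt0; apply/eqP => Sku0.
by move: gu_gt0; rewrite -(gform_Sexp GS k) Sku0 gform0 ltxx.
Qed.

Lemma space_like_Sexp k (u : 'cV[R]_4) :
  space_like G u -> space_like G ((Smat ^+ k) *m u).
Proof. by rewrite /space_like (gtilde_Sexp GS). Qed.

Lemma time_like_Sexp k (u : 'cV[R]_4) :
  time_like G u -> time_like G ((Smat ^+ k) *m u).
Proof. by rewrite /time_like (gtilde_Sexp GS). Qed.

Lemma isotropic_Sexp k (u : 'cV[R]_4) :
  isotropic G u -> isotropic G ((Smat ^+ k) *m u).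
Proof. by case=> u_neq0 gtu0; split; rewrite ?Sexp_mulmx_neq0 ?(gtilde_Sexp GS). Qed.

End CausalCharacter.

Theorem corollary2p3 (R : realFieldType) (G : 'M[R]_4)
  (Gsym : metric_symmetric G) (Gpos : metric_pos_def G) (GS : S_compatible G)
  (u : 'cV[R]_4) :
  forall k : nat, (1 <= k <= 3)%N ->
    (space_like G u -> space_like G ((Smat ^+ k) *m u)) /\
    (isotropic G u -> isotropic G ((Smat ^+ k) *m u)) /\
    (time_like G u -> time_like G ((Smat ^+ k) *m u)).
Proof.
move=> k _; split; first exact: space_like_Sexp.
split; first exact: isotropic_Sexp.
exact: time_like_Sexp.
Qed.
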